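(* Let $\mathbb{F}$ be a field of characteristic $2$ with algebraic closure $\overline{\mathbb{F}}$, let $V$ be an $n$-dimensional $\mathbb{F}$-vector space and $b$ a non-degenerate symmetric bilinear form on $V$ with quadratic form $Q: x\mapsto b(x,x)$. Let $V_1, V_2$ be linear subspaces of $V$ such that $b_a(v_1,v_2)=0$ for all $v_1\in V_1$, $v_2\in V_2$, and assume $\dim V_1 + \dim V_2 > n$. Then: (1) $n$ is odd and the Witt index of $b$ equals $\frac{n-1}{2}$; (2) both $V_1$ and $V_2$ contain $(\operatorname{Ker} Q)^\perp$; (3) $\dim V_1 + \dim V_2 = n+1$.
   Context: Every $\alpha\in\overline{\mathbb{F}}$ has a unique square root $\sqrt{\alpha}\in\overline{\mathbb{F}}$. The a-transform of $b$ is the map $b_a : V^2 \to \overline{\mathbb{F}}$, $b_a(x,y) := b(x,y) + \sqrt{Q(x)Q(y)}$. $\operatorname{Ker} Q = \{x\in V: Q(x)=0\}$ (a linear subspace in characteristic $2$), and $X^\perp = \{y\in V : b(x,y)=0\ \forall x\in X\}$. The Witt index of $b$ is the greatest dimension of a subspace on which $b$ vanishes identically. *)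

From HB Require Import structures.
From mathcomp Require Import all_boot all_order all_algebra all_field.
Set Implicit Arguments. Unset Strict Implicit. Unset Printing Implicit Defensive.
Import GRing.Theory.
Local Open Scope ring_scope.

(* Square roots in an algebraically closed field (unique in characteristic 2). *)
Lemma sqrt_exists (L : closedFieldType) (a : L) : exists y : L, y ^+ 2 == a.
Proof.
have [y Hy] := @solve_monicpoly L 2 (nth 0 [:: a]) isT.
exists y; apply/eqP; rewrite Hy big_ord_recl big_ord_recl big_ord0 /=.
by rewrite expr0 mulr1 mul0r !addr0.
Qed.

Definition sqrtL (L : closedFieldType) (a : L) : L := xchoose (sqrt_exists a).

Definition qform (F : fieldType) (V : vectType F) (b : V -> V -> F) (x : V) : F :=
  b x x.

Definition a_transform (F : fieldType) (L : closedFieldType) (iota : {rmorphism F -> L})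
  (V : vectType F) (b : V -> V -> F) (x y : V) : L :=
  iota (b x y) + sqrtL (iota (qform b x * qform b y)).

Definition totally_isotropic (F : fieldType) (V : vectType F) (b : V -> V -> F)
  (U : {vspace V}) : Prop :=
  forall x y, x \in U -> y \in U -> b x y = 0.

Definition is_witt_index (F : fieldType) (V : vectType F) (b : V -> V -> F) (k : nat) : Prop :=
  (exists U : {vspace V}, totally_isotropic b U /\ \dim U = k) /\
  (forall U : {vspace V}, totally_isotropic b U -> (\dim U <= k)%N).

Definition kerQ (F : fieldType) (V : vectType F) (b : V -> V -> F) : pred V :=
  fun x => qform b x == 0.

Definition perp (F : fieldType) (V : vectType F) (b : V -> V -> F) (X : pred V) : V -> Prop :=
  fun y => forall x, X x -> b x y = 0.

From HB Require Import structures.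
From mathcomp Require Import all_boot all_order all_algebra all_field.
From mathcomp Require Import zify ring.
From Stdlib Require Import Classical.
Set Implicit Arguments. Unset Strict Implicit. Unset Printing Implicit Defensive.
Import GRing.Theory.
Local Open Scope ring_scope.

(* Since sqrt (Q x * Q y) cancels b x y, b_a(x,y) = 0 forces
   b(x,y)^2 = Q(x) Q(y).  By the dimension count some y in V2 has Q y != 0; then Q
   vanishes on K = V1 :&: y^perp, so V2 <= K^perp and dim V1 + dim V2 <= n + 1.
   Equality holds, hence V2 = K^perp contains (Ker Q)^perp, and symmetrically for V1.
   For the Witt index pick z in V1 :&: V2 with Q z != 0 and let pi be the orthogonal
   projection onto z^perp.  In characteristic 2 the form b (pi x) (pi y) is alternating
   on W = V1 + V2 and vanishes on W^perp + <z>, of dimension n - dim W + 1, so W has an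
   isotropic subspace U for it with 2 dim U >= n + 1.  Then U :&: z^perp is b-isotropic
   of dimension at least (n - 1)/2, while isotropic subspaces orthogonal to the
   anisotropic z have dimension less than n/2. *)

Section VectorDim.
Variables (F : fieldType) (V : vectType F).

Lemma dimv_add_line (U : {vspace V}) v :
  v \notin U -> \dim (U + <[v]>) = (\dim U).+1.
Proof.
move=> vU; have v0 : v != 0 by apply: contraNneq vU => ->; rewrite mem0v.
rewrite dimv_disjoint_sum ?dim_vline ?v0 ?addn1 //.
apply/eqP; rewrite -subv0; apply/subvP => w /memv_capP [wU /vlineP [k wk]].
move: wU; rewrite memv0 wk rpredZeq (negPf vU) orbF => /eqP ->.
by rewrite scale0r.
Qed.

Lemma dimv_cap_lker1 (X : {vspace V}) (phi : 'Hom(V, F^o)) :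
  ((\dim X).-1 <= \dim (X :&: lker phi))%N.
Proof.
rewrite -(limg_ker_dim phi X).
have : (\dim (phi @: X) <= 1)%N by rewrite (leq_trans (dimvS (subvf _))) ?dimvf.
by case: (\dim (phi @: X)) => [|[|//]] _; rewrite ?addn0 ?addn1 ?leq_pred.
Qed.
End VectorDim.

Section BilinearForm.
Variables (F : fieldType) (V : vectType F) (b : {bilinear V -> V -> F^o}).

Definition perp1 (u : V) : {vspace V} := lker (linfun (b u : V -> F^o)).

Lemma mem_perp1 u y : (y \in perp1 u) = (b u y == 0).
Proof. by rewrite memv_ker lfunE. Qed.

Lemma dimv_cap_perp1 (X : {vspace V}) u : ((\dim X).-1 <= \dim (X :&: perp1 u))%N.
Proof. exact: dimv_cap_lker1. Qed.

Definition perpv (U : {vspace V}) : {vspace V} :=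
  (\bigcap_(i < \dim U) perp1 (vbasis U)`_i)%VS.

Lemma perpvP (U : {vspace V}) y : reflect {in U, forall u, b u y = 0} (y \in perpv U).
Proof.
apply: (iffP subv_bigcapP) => [yU u /coord_vbasis -> | yU i _].
  rewrite linear_sumlz big1 //= => i _.
  by move: (yU i isT); rewrite -memvE mem_perp1 linearZl_LR => /eqP ->; rewrite scaler0.
by rewrite -memvE mem_perp1 yU // vbasis_mem // mem_nth // size_tuple.
Qed.

Lemma perpvPn (U : {vspace V}) y : y \notin perpv U -> exists2 u, u \in U & b u y != 0.
Proof.
move=> /perpvP yU; apply: NNPP => noU; apply: yU => u uU.
by apply/eqP; apply: contra_notT noU => buy; exists u.
Qed.

Lemma perpvS (U1 U2 : {vspace V}) : (U1 <= U2)%VS -> (perpv U2 <= perpv U1)%VS.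
Proof.
move=> U12; apply/subvP => y /perpvP yU2; apply/perpvP => u uU1.
exact/yU2/(subvP U12).
Qed.

Lemma dimv_perpv_ge (U : {vspace V}) : (\dim {:V} - \dim U <= \dim (perpv U))%N.
Proof.
have dim_cap k (g : nat -> V) :
    (\dim {:V} - k <= \dim (\bigcap_(i < k) perp1 (g i)))%N.
  elim: k => [|k IH]; first by rewrite big_ord0 subn0.
  rewrite big_ord_recr /= subnS; apply: leq_trans (dimv_cap_perp1 _ _).
  by rewrite -!subn1 leq_sub2r.
exact: (dim_cap _ (fun i => (vbasis U)`_i)).
Qed.

Lemma isotropic_add_line (U : {vspace V}) x :
  totally_isotropic b U -> {in U, forall u, b x u = 0} -> {in U, forall u, b u x = 0} ->
  b x x = 0 -> totally_isotropic b (U + <[x]>).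
Proof.
move=> isoU xU Ux xx u v /memv_addP [u1 u1U [_ /vlineP [c ->] ->]].
move=> /memv_addP [v1 v1U [_ /vlineP [d ->] ->]].
rewrite linearDl linearDr linearDr /= !linearZl_LR !linearZ /=.
by rewrite isoU // xU // Ux // xx !scaler0 !addr0.
Qed.

Lemma alternating_skew (W : {vspace V}) :
  {in W, forall x, b x x = 0} -> {in W &, forall x y, b x y = - b y x}.
Proof.
move=> altW x y xW yW; apply/eqP; rewrite -addr_eq0; apply/eqP.
have := altW (x + y) (memvD xW yW).
by rewrite linearDl !linearDr /= altW // altW // add0r addr0.
Qed.

Lemma alternating_isotropic_subspace (W R : {vspace V}) :
    {in W, forall x, b x x = 0} -> (R <= W)%VS -> {in R & W, forall r w, b r w = 0} ->
  exists2 U : {vspace V}, (U <= W)%VS &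
    totally_isotropic b U /\ (\dim W + \dim R <= 2 * \dim U)%N.
Proof.
have [k] := ubnP (\dim W); elim: k => // k IH in W R *.
rewrite ltnS => leWk altW RW RW_perp.
have [isoW | /subvPn [y yW /perpvPn [x xW bxy]]] := boolP (W <= perpv W)%VS.
  exists W => //; split; first by move=> x y xW /(subvP isoW) /perpvP ->.
  by rewrite mul2n -addnn leq_add2l dimvS.
have skewW := alternating_skew altW.
(* x, y span a hyperbolic plane; W' is its orthogonal in W. *)
set W' := (W :&: perp1 x :&: perp1 y)%VS.
have memW' z : (z \in W') = [&& z \in W, b x z == 0 & b y z == 0].
  by rewrite !memv_cap !mem_perp1 andbA.
have W'W : (W' <= W)%VS by apply/subvP => z; rewrite memW' => /and3P [].
have xW' : x \notin W' by rewrite memW' (skewW y x) // oppr_eq0 (negPf bxy) !andbF.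
have yW' : y \notin W' by rewrite memW' (negPf bxy) andbF.
have ltW' : (\dim W' < \dim W)%N.
  by rewrite -(dimv_add_line yW') dimvS // subv_add W'W -memvE.
have geW' : (\dim W <= (\dim W').+2)%N.
  have := dimv_cap_perp1 W x; have := dimv_cap_perp1 (W :&: perp1 x) y.
  by rewrite -/W'; lia.
have RW' : (R <= W')%VS.
  apply/subvP => r rR; have rW := subvP RW r rR.
  by rewrite memW' rW skewW // RW_perp // skewW // RW_perp // oppr0 eqxx.
have [U' U'W' [isoU' dimU']] := IH W' R (leq_trans ltW' leWk)
  (fun z zW' => altW z (subvP W'W z zW')) RW'
  (fun r w rR wW' => RW_perp r w rR (subvP W'W w wW')).
have memU' u : u \in U' -> b x u = 0 /\ u \in W.
  by move/(subvP U'W'); rewrite memW' => /and3P [? /eqP ? _].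
exists (U' + <[x]>)%VS.
  by rewrite subv_add -memvE xW (subv_trans U'W' W'W).
split.
  apply: isotropic_add_line => //; last exact: altW.
    by move=> u /memU' [].
  by move=> u /memU' [bxu uW]; rewrite skewW // bxu oppr0.
rewrite dimv_add_line; last by apply: contra xW' => /(subvP U'W').
lia.
Qed.
End BilinearForm.

Section SymmetricForm.
Variables (F : fieldType) (V : vectType F) (b : {bilinear V -> V -> F^o}).
Hypothesis bsym : forall x y : V, b x y = b y x.
Hypothesis bnondeg : forall x : V, (forall y : V, b x y = 0) -> x = 0.

Local Notation n := (\dim {:V}).

Lemma dimv_perpv (U : {vspace V}) : \dim (perpv b U) = (n - \dim U)%N.
Proof.
have UC0 : (perpv b U :&: perpv b U^C = 0)%VS.
  apply/eqP; rewrite -subv0; apply/subvP => y /memv_capP [/perpvP yU /perpvP yUC].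
  rewrite memv0; apply/eqP/bnondeg => x; rewrite bsym.
  have /memv_addP [u uU [c cUC ->]] : x \in (U + U^C)%VS by rewrite addv_complf memvf.
  by rewrite linearDl /= yU // yUC // addr0.
have := dimv_disjoint_sum UC0; have := dimvS (subvf (perpv b U + perpv b U^C)).
have := dimv_perpv_ge b U; have := dimv_perpv_ge b U^C; have := dimvS (subvf U).
rewrite dimv_compl; lia.
Qed.

Lemma perpvK (U : {vspace V}) : perpv b (perpv b U) = U.
Proof.
apply/eqP; rewrite eq_sym eqEdim !dimv_perpv.
have -> : (U <= perpv b (perpv b U))%VS.
  by apply/subvP => u uU; apply/perpvP => y /perpvP yU; rewrite bsym yU.
by have := dimvS (subvf U); lia.
Qed.

Lemma isotropic_sub_perpv (U : {vspace V}) : totally_isotropic b U -> (U <= perpv b U)%VS.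
Proof. by move=> isoU; apply/subvP => y yU; apply/perpvP => x xU; apply: isoU. Qed.

Lemma isotropic_dimv (U : {vspace V}) : totally_isotropic b U -> (2 * \dim U <= n)%N.
Proof. by move/isotropic_sub_perpv/dimvS; rewrite dimv_perpv; lia. Qed.

Lemma isotropic_dimv_lt (U : {vspace V}) z : totally_isotropic b U ->
  {in U, forall u, b z u = 0} -> qform b z != 0 -> (2 * \dim U < n)%N.
Proof.
move=> isoU zU qz; have zU' : z \notin U by apply: contra qz => /zU /eqP.
have : (U + <[z]> <= perpv b U)%VS.
  rewrite subv_add isotropic_sub_perpv // -memvE.
  by apply/perpvP => u uU; rewrite bsym zU.
by move/dimvS; rewrite dimv_add_line // dimv_perpv; lia.
Qed.

Lemma is_witt_index_odd (U : {vspace V}) :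
  totally_isotropic b U -> n = (2 * \dim U).+1 -> is_witt_index b (\dim U).
Proof.
move=> isoU nE; split; first by exists U.
by move=> U' /isotropic_dimv; rewrite nE; lia.
Qed.
End SymmetricForm.

Lemma a_transform_eq0 (F : fieldType) (L : closedFieldType) (iota : {rmorphism F -> L})
    (V : vectType F) (b : V -> V -> F) x y :
  a_transform iota b x y = 0 -> b x y ^+ 2 = qform b x * qform b y.
Proof.
rewrite /a_transform /sqrtL => /eqP; rewrite addr_eq0 => /eqP bxy.
apply: (fmorph_inj iota); rewrite rmorphXn bxy sqrrN.
exact/eqP/(xchooseP (sqrt_exists _)).
Qed.

Section QuadraticOrthogonality.
Variables (F : fieldType) (V : vectType F) (b : {bilinear V -> V -> F^o}).
Hypothesis bsym : forall x y : V, b x y = b y x.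
Hypothesis bnondeg : forall x : V, (forall y : V, b x y = 0) -> x = 0.

Local Notation n := (\dim {:V}).
Local Notation Q := (qform b).

(* b_a-orthogonality of V1 and V2 with the root squared away (a_transform_eq0). *)
Definition qorth (V1 V2 : {vspace V}) : Prop :=
  {in V1 & V2, forall x y, b x y ^+ 2 = Q x * Q y}.

Lemma qorthC V1 V2 : qorth V1 V2 -> qorth V2 V1.
Proof. by move=> V12 x y xV2 yV1; rewrite bsym V12 // mulrC. Qed.

Lemma qorth_sub_perpv V1 V2 (K : {vspace V}) : qorth V1 V2 ->
  (K <= V1)%VS -> {in K, forall k, Q k = 0} -> (V2 <= perpv b K)%VS.
Proof.
move=> V12 KV1 QK; apply/subvP => y yV2; apply/perpvP => k kK.
by apply/eqP; rewrite -sqrf_eq0 V12 ?(subvP KV1) // QK // mul0r.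
Qed.

Lemma qform_cap_perp1 V1 V2 y : qorth V1 V2 -> y \in V2 -> Q y != 0 ->
  {in (V1 :&: perp1 b y)%VS, forall k, Q k = 0}.
Proof.
move=> V12 yV2 Qy k /memv_capP [kV1]; rewrite mem_perp1 bsym => /eqP bky.
apply/eqP; move: (V12 k y kV1 yV2); rewrite bky expr0n /= => /esym/eqP.
by rewrite mulf_eq0 (negPf Qy) orbF.
Qed.

Lemma qorth_sub_perpv_cap V1 V2 y : qorth V1 V2 ->
  y \in V2 -> Q y != 0 -> (V2 <= perpv b (V1 :&: perp1 b y))%VS.
Proof.
move=> V12 yV2 Qy; apply: (qorth_sub_perpv V12 (capvSl _ _)).
exact: qform_cap_perp1 V12 yV2 Qy.
Qed.

Lemma qorth_dimv_le V1 V2 y : qorth V1 V2 -> y \in V2 -> Q y != 0 ->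
  (\dim V1 + \dim V2 <= n.+1)%N.
Proof.
move=> V12 yV2 Qy; have := dimvS (qorth_sub_perpv_cap V12 yV2 Qy).
rewrite dimv_perpv //; have := dimv_cap_perp1 b V1 y; have := dimvS (subvf V1); lia.
Qed.

Lemma qorth_anisotropic V1 V2 : qorth V1 V2 -> (n < \dim V1 + \dim V2)%N ->
  exists2 y, y \in V2 & Q y != 0.
Proof.
move=> V12 ltn.
have [V2perp | /subvPn [y yV2 /perpvPn [x xV1 bxy]]] := boolP (V2 <= perpv b V1)%VS.
  by move: (dimvS V2perp); rewrite dimv_perpv //; have := dimvS (subvf V1); lia.
exists y => //; apply: contraNneq (expf_neq0 2 bxy) => Qy.
by rewrite V12 // Qy mulr0.
Qed.

Lemma qorth_dimv_sum V1 V2 : qorth V1 V2 ->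
  (n < \dim V1 + \dim V2)%N -> (\dim V1 + \dim V2 = n.+1)%N.
Proof.
move=> V12 ltn; have [y yV2 Qy] := qorth_anisotropic V12 ltn.
by have := qorth_dimv_le V12 yV2 Qy; lia.
Qed.

Lemma qorth_perpv_cap V1 V2 y : qorth V1 V2 -> (n < \dim V1 + \dim V2)%N ->
  y \in V2 -> Q y != 0 -> V2 = perpv b (V1 :&: perp1 b y).
Proof.
move=> V12 ltn yV2 Qy; apply/eqP; rewrite eqEdim qorth_sub_perpv_cap // dimv_perpv //.
by have := dimv_cap_perp1 b V1 y; have := qorth_dimv_sum V12 ltn; lia.
Qed.

Lemma qorth_perp_kerQ_sub V1 V2 y : qorth V1 V2 -> (n < \dim V1 + \dim V2)%N ->
  perp b (kerQ b) y -> y \in V2.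
Proof.
move=> V12 ltn yperp; have [y0 y0V2 Qy0] := qorth_anisotropic V12 ltn.
rewrite (qorth_perpv_cap V12 ltn y0V2 Qy0); apply/perpvP => k kK.
by apply: yperp; apply/eqP; apply: qform_cap_perp1 V12 y0V2 Qy0 k kK.
Qed.

Lemma qorth_perpv_sub V1 V2 : qorth V1 V2 -> (n < \dim V1 + \dim V2)%N ->
  (perpv b V1 <= V2)%VS.
Proof.
move=> V12; rewrite addnC => ltn; have V21 := qorthC V12.
have [x xV1 Qx] := qorth_anisotropic V21 ltn.
by rewrite {1}(qorth_perpv_cap V21 ltn xV1 Qx) perpvK // capvSl.
Qed.

Lemma qorth_cap_anisotropic V1 V2 : qorth V1 V2 -> (n < \dim V1 + \dim V2)%N ->
  exists2 z, z \in (V1 :&: V2)%VS & Q z != 0.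
Proof.
move=> V12 ltn; apply: NNPP => noz.
have QV12 : {in (V1 :&: V2)%VS, forall k, Q k = 0}.
  by move=> k kV12; apply/eqP; apply: contra_notT noz => Qk; exists k.
have : (V1 + V2 <= perpv b (V1 :&: V2))%VS.
  rewrite subv_add (qorth_sub_perpv V12) ?capvSl //.
  by rewrite (qorth_sub_perpv (qorthC V12)) ?capvSr.
move/dimvS; rewrite dimv_perpv //; have := dimv_sum_cap V1 V2.
have := dimvS (capvSl V1 V2); have := dimvS (subvf V1).
by have := qorth_dimv_sum V12 ltn; lia.
Qed.
End QuadraticOrthogonality.

Section ProjectedForm.
Variables (F : fieldType) (V : vectType F) (b : {bilinear V -> V -> F^o}) (z : V).

(* b (pi x) (pi y) for symmetric b, where pi is the orthogonal projection onto z^perp *)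
Definition bproj (x y : V) : F^o := b x y - b x z * b z y / qform b z.

Lemma bproj_is_bilinear : bilinear_for
  (GRing.Scale.Law.clone _ _ *:%R _) (GRing.Scale.Law.clone _ _ *:%R _) bproj.
Proof.
split=> [y|x] a u v; rewrite /bproj ?linearPl ?linearPr /= -![_ *: _]/(_ * _); ring.
Qed.

HB.instance Definition _ :=
  bilinear_isBilinear.Build F V V F^o _ _ bproj bproj_is_bilinear.

Lemma bproj_perp1 x y : b z y = 0 -> bproj x y = b x y.
Proof. by rewrite /bproj => ->; rewrite mulr0 mul0r subr0. Qed.

Hypothesis bsym : forall x y : V, b x y = b y x.

Lemma bprojC x y : bproj x y = bproj y x.
Proof. by rewrite /bproj (bsym x y) (bsym x z) (bsym z y) [b z x * _]mulrC. Qed.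

Lemma bproj_eq0_perpv (W : {vspace V}) : z \in W -> qform b z != 0 ->
  {in (perpv b W + <[z]>)%VS & W, forall r w, bproj r w = 0}.
Proof.
move=> zW Qz _ w /memv_addP [p /perpvP pW [_ /vlineP [c ->] ->]] wW.
rewrite linearDl linearZl_LR /= /bproj !(bsym p) !pW // -[qform b z]/(b z z).
by rewrite !mul0r subrr add0r mulrAC mulfV // mul1r subrr scaler0.
Qed.

Hypothesis HF : 2%N \in [pchar F].

Lemma bproj_alternating (V1 V2 : {vspace V}) : qorth b V1 V2 ->
  z \in V1 -> z \in V2 -> qform b z != 0 -> {in (V1 + V2)%VS, forall x, bproj x x = 0}.
Proof.
move=> V12 zV1 zV2 Qz _ /memv_addP [x1 x1V1 [x2 x2V2 ->]].
have diag x : b x z ^+ 2 = qform b x * qform b z -> bproj x x = 0.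
  by move=> bxz; rewrite /bproj (bsym z x) -expr2 bxz mulfK // subrr.
rewrite linearDl !linearDr /= (bprojC x2 x1) (diag x1) ?V12 //.
by rewrite (diag x2) ?(qorthC bsym V12) // add0r addr0 addrr_pchar2.
Qed.
End ProjectedForm.

Section WittIndex.
Variables (F : fieldType) (HF : 2%N \in [pchar F]).
Variables (V : vectType F) (b : {bilinear V -> V -> F^o}).
Hypothesis bsym : forall x y : V, b x y = b y x.
Hypothesis bnondeg : forall x : V, (forall y : V, b x y = 0) -> x = 0.

Local Notation n := (\dim {:V}).

Lemma qorth_isotropic_half (V1 V2 : {vspace V}) : qorth b V1 V2 ->
    (n < \dim V1 + \dim V2)%N ->
  exists2 U : {vspace V}, totally_isotropic b U & n = (2 * \dim U).+1.
Proof.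
move=> V12 ltn.
have [z /memv_capP [zV1 zV2] Qz] := qorth_cap_anisotropic bsym bnondeg V12 ltn.
set W := (V1 + V2)%VS; have zW : z \in W := subvP (addvSl V1 V2) z zV1.
have RW : (perpv b W + <[z]> <= W)%VS.
  rewrite subv_add -memvE zW andbT; apply: subv_trans (perpvS b (addvSl V1 V2)) _.
  exact: subv_trans (qorth_perpv_sub bsym bnondeg V12 ltn) (addvSr V1 V2).
have [U UW [isoU dimU]] := alternating_isotropic_subspace
  (bproj_alternating bsym HF V12 zV1 zV2 Qz) RW (bproj_eq0_perpv bsym zW Qz).
have zW' : z \notin perpv b W by apply: contra Qz => /perpvP /(_ z zW) /eqP.
rewrite dimv_add_line // dimv_perpv // -/W in dimU.
have isoU0 : totally_isotropic b (U :&: perp1 b z).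
  move=> x y /memv_capP [xU _] /memv_capP [yU]; rewrite mem_perp1 => /eqP bzy.
  by rewrite -(bproj_perp1 x bzy); apply: isoU.
exists (U :&: perp1 b z)%VS => //.
have zU0 : {in (U :&: perp1 b z)%VS, forall u, b z u = 0}.
  by move=> u /memv_capP [_]; rewrite mem_perp1 => /eqP.
have := isotropic_dimv_lt bsym bnondeg isoU0 zU0 Qz.
by have := dimv_cap_perp1 b U z; have := dimvS (subvf W); lia.
Qed.
End WittIndex.

Theorem lemma4p7
  (F : fieldType) (HF : 2%N \in [pchar F])
  (L : closedFieldType) (iota : {rmorphism F -> L})
  (Lalg : forall z : L, exists p : {poly F}, p != 0 /\ root (map_poly iota p) z)
  (V : vectType F) (n : nat) (Hn : \dim (fullv : {vspace V}) = n)
  (b : {bilinear V -> V -> F^o})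
  (bsym : forall x y : V, b x y = b y x)
  (bnondeg : forall x : V, (forall y : V, b x y = 0) -> x = 0)
  (V1 V2 : {vspace V})
  (Horth : forall v1 v2 : V, v1 \in V1 -> v2 \in V2 -> a_transform iota b v1 v2 = 0)
  (Hdim : (\dim V1 + \dim V2 > n)%N) :
  [/\ (odd n /\ is_witt_index b n.-1./2),
      (forall y : V, perp b (kerQ b) y -> y \in V1 /\ y \in V2)
    & (\dim V1 + \dim V2 = n.+1)%N].
Proof.
have V12 : qorth b V1 V2 by move=> x y xV1 yV2; apply/a_transform_eq0/Horth.
subst n; have [U isoU nE] := qorth_isotropic_half HF bsym bnondeg V12 Hdim.
split.
- split; first by rewrite nE /= mul2n odd_double.
  by rewrite nE /= mul2n doubleK; apply: is_witt_index_odd.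
- move=> y yperp; split; last exact (qorth_perp_kerQ_sub bsym bnondeg V12 Hdim yperp).
  rewrite addnC in Hdim.
  exact (qorth_perp_kerQ_sub bsym bnondeg (qorthC bsym V12) Hdim yperp).
- exact (qorth_dimv_sum bsym bnondeg V12 Hdim).
Qed.
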